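(* Let $d,a,b$ be positive integers, $r=(d+2b)/d$, $R=(a+d)/d$, and assume $R\ge 3r$. Define, for $t\in\mathbb C\setminus\{\pm1,\pm r\}$, \[ \Phi(t)=d\log|t+r|-d\log|t-r|+(a+d)\bigl(\log|t-1|-\log|t+1|\bigr). \] Then for each $0\le\theta\le\pi/2$ there is a unique $u_\theta>0$ with $\Phi(r+u_\theta e^{i\theta})=0$; moreover $\Phi(r+ue^{i\theta})>0$ for $0<u<u_\theta$ and $\Phi(r+ue^{i\theta})<0$ for $u>u_\theta$. *)

(* classical reals. Complex numbers are represented by (real, imaginary) parts. *)
From Stdlib Require Import Reals.
Open Scope R_scope.

Definition cmod (x y : R) : R := sqrt (x ^ 2 + y ^ 2).

Definition Phi (d a : nat) (r : R) (x y : R) : R :=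
  INR d * ln (cmod (x + r) y) - INR d * ln (cmod (x - r) y)
  + (INR a + INR d) * (ln (cmod (x - 1) y) - ln (cmod (x + 1) y)).

Definition r_of (d b : nat) : R := (INR d + 2 * INR b) / INR d.
Definition R_of (d a : nat) : R := (INR a + INR d) / INR d.

Definition Phi_ray (d a b : nat) (theta u : R) : R :=
  Phi d a (r_of d b) (r_of d b + u * cos theta) (u * sin theta).

From Stdlib Require Import Reals Ranalysis5 Lra Lia Psatz.
Open Scope R_scope.

(* Along the ray [t = r + u e^{i theta}], write [c = cos theta] and [R = K]. Then
   [|t + r|^2], [|t - 1|^2], [|t + 1|^2] are the quadratics [ray_sqnorm k c u] for
   [k = 2r, r - 1, r + 1], and [Phi = d/2 * Psi] since [|t - r| = u]. Its derivative is
   [dPsi = -4 Pnum / (u |t+r|^2 |t+1|^2 |t-1|^2)], where the quintic [Pnum] has a positive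
   constant term and nonpositive coefficients [Pnum1 .. Pnum5] once [K >= 3r]; hence [Pnum]
   decreases and [Pnum r <= 0]. So [Psi] decreases until [Pnum] vanishes and increases
   afterwards. As [Psi -> +oo] at [0+] while [Psi u <= 8 r^2 / u] for [u >= 1], [Psi] is
   negative on its increasing branch and changes sign exactly once. *)

Definition ray_sqnorm (k c u : R) : R := k^2 + 2*k*c*u + u^2.

Definition Psi (r c K u : R) : R :=
  ln (ray_sqnorm (2*r) c u) - 2 * ln u
  - K * (ln (ray_sqnorm (r+1) c u) - ln (ray_sqnorm (r-1) c u)).

Definition dPsi (r c K u : R) : R :=
  (2*(2*r)*c + 2*u) / ray_sqnorm (2*r) c u - 2 / u
  - K * ((2*(r+1)*c + 2*u) / ray_sqnorm (r+1) c u
         - (2*(r-1)*c + 2*u) / ray_sqnorm (r-1) c u).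

Definition Pnum1 (r c K : R) : R := c*r*(r^2-1)*(9*r^2-1-4*r*K).
Definition Pnum2 (r c K : R) : R :=
  4*r^2*(1+r^2) + 12*r^2*c^2*(r^2-1) - 4*r*K*(2*r^2 + c^2*(r^2-1)).
Definition Pnum3 (r c K : R) : R :=
  c*(K*(1-13*r^2) + 2*r - 4*r*c^2 + 10*r^3 + 4*r^3*c^2).
Definition Pnum4 (r c K : R) : R := 2*r*(1+2*c^2)*(r-K).
Definition Pnum5 (r c K : R) : R := c*(r-K).

Definition Pnum (r c K u : R) : R :=
  2*r^2*(r^2-1)^2 + Pnum1 r c K * u + Pnum2 r c K * u^2 + Pnum3 r c K * u^3
  + Pnum4 r c K * u^4 + Pnum5 r c K * u^5.

Lemma ln_le_sub1 x : 0 < x -> ln x <= x - 1.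
Proof.
intros x_gt0; pose proof (exp_ineq1_le (ln x)) as H.
rewrite exp_ln in H; lra.
Qed.

Lemma ln_le x y : 0 < x -> x <= y -> ln x <= ln y.
Proof.
intros x_gt0 [x_lt_y | <-]; [left; apply ln_increasing |]; lra.
Qed.

Lemma ln_sqrt x : 0 < x -> ln (sqrt x) = ln x / 2.
Proof.
intros x_gt0; pose proof (sqrt_lt_R0 x x_gt0).
rewrite <- (sqrt_sqrt x) at 2 by lra.
rewrite ln_mult by lra; lra.
Qed.

Lemma derivable_pt_lim_ray_sqnorm k c u :
  derivable_pt_lim (ray_sqnorm k c) u (2*k*c + 2*u).
Proof.
replace (2*k*c + 2*u) with (0 + 2*k*c*1 + INR 2 * u^(Init.Nat.pred 2)) by (simpl; ring).
apply derivable_pt_lim_plus; [apply derivable_pt_lim_plus |].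
- apply derivable_pt_lim_const.
- apply derivable_pt_lim_scal, derivable_pt_lim_id.
- apply derivable_pt_lim_pow.
Qed.

Section Ray.

Variables r c K : R.
Hypothesis r_gt1 : 1 < r.
Hypothesis c_ge0 : 0 <= c.
Hypothesis c_le1 : c <= 1.
Hypothesis K_ge : 3 * r <= K.

Lemma ray_sqnorm_pos k u : 0 < k -> 0 < u -> 0 < ray_sqnorm k c u.
Proof.
intros k_gt0 u_gt0; unfold ray_sqnorm.
assert (0 <= k*c*u) by (apply Rmult_le_pos; [apply Rmult_le_pos |]; lra).
nra.
Qed.

Lemma derivable_pt_lim_ln_ray_sqnorm k u : 0 < k -> 0 < u ->
  derivable_pt_lim (fun v => ln (ray_sqnorm k c v)) u
    ((2*k*c + 2*u) / ray_sqnorm k c u).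
Proof.
intros k_gt0 u_gt0; pose proof (ray_sqnorm_pos k u k_gt0 u_gt0).
replace ((2*k*c + 2*u) / ray_sqnorm k c u)
  with (/ ray_sqnorm k c u * (2*k*c + 2*u)) by (field; lra).
apply (derivable_pt_lim_comp (ray_sqnorm k c) ln).
- apply derivable_pt_lim_ray_sqnorm.
- now apply derivable_pt_lim_ln.
Qed.

Lemma derivable_pt_lim_Psi u : 0 < u -> derivable_pt_lim (Psi r c K) u (dPsi r c K u).
Proof.
intros u_gt0; unfold dPsi.
replace (2 / u) with (2 * / u) by (unfold Rdiv; ring).
apply derivable_pt_lim_minus; [apply derivable_pt_lim_minus |].
- apply derivable_pt_lim_ln_ray_sqnorm; lra.
- now apply derivable_pt_lim_scal, derivable_pt_lim_ln.
- apply derivable_pt_lim_scal, derivable_pt_lim_minus;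
    apply derivable_pt_lim_ln_ray_sqnorm; lra.
Qed.

Lemma dPsi_eq u : 0 < u ->
  dPsi r c K u = -4 * Pnum r c K u
    / (u * ray_sqnorm (2*r) c u * ray_sqnorm (r+1) c u * ray_sqnorm (r-1) c u).
Proof.
intros u_gt0.
pose proof (ray_sqnorm_pos (2*r) u ltac:(lra) u_gt0).
pose proof (ray_sqnorm_pos (r+1) u ltac:(lra) u_gt0).
pose proof (ray_sqnorm_pos (r-1) u ltac:(lra) u_gt0).
unfold dPsi, Pnum, Pnum1, Pnum2, Pnum3, Pnum4, Pnum5; unfold ray_sqnorm in *.
field; repeat split; lra.
Qed.

Lemma dPsi_scaled_Pnum u : 0 < u ->
  exists D, 0 < D /\ dPsi r c K u = - D * Pnum r c K u.
Proof.
intros u_gt0; rewrite dPsi_eq by lra.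
pose proof (ray_sqnorm_pos (2*r) u ltac:(lra) u_gt0).
pose proof (ray_sqnorm_pos (r+1) u ltac:(lra) u_gt0).
pose proof (ray_sqnorm_pos (r-1) u ltac:(lra) u_gt0).
set (D := u * _ * _ * _).
assert (D_gt0 : 0 < D) by (unfold D; repeat apply Rmult_lt_0_compat; lra).
exists (4 / D); split.
- apply Rdiv_lt_0_compat; lra.
- field; lra.
Qed.

Lemma r2_gt1 : 1 < r^2.
Proof. nra. Qed.

Lemma Pnum1_nonpos : Pnum1 r c K <= 0.
Proof.
pose proof r2_gt1; unfold Pnum1.
assert (0 <= c*r*(r^2-1)) by (apply Rmult_le_pos; [apply Rmult_le_pos |]; lra).
assert (9*r^2 - 1 - 4*r*K <= 0) by nra.
nra.
Qed.

Lemma Pnum2_le : Pnum2 r c K <= 4*r^2*(1 - 5*r^2).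
Proof.
pose proof r2_gt1; unfold Pnum2.
assert (0 <= c^2*(r^2-1)) by (apply Rmult_le_pos; nra).
assert (0 <= (K - 3*r) * (4*r*(2*r^2 + c^2*(r^2-1)))) by (apply Rmult_le_pos; nra).
nra.
Qed.

Lemma Pnum3_nonpos : Pnum3 r c K <= 0.
Proof.
pose proof r2_gt1; unfold Pnum3.
assert (0 <= (K - 3*r) * (13*r^2 - 1)) by (apply Rmult_le_pos; nra).
assert (0 <= 4*r*(r^2-1)*(1-c^2)) by (apply Rmult_le_pos; [apply Rmult_le_pos |]; nra).
assert (K*(1-13*r^2) + 2*r - 4*r*c^2 + 10*r^3 + 4*r^3*c^2 <= 0) by nra.
nra.
Qed.

Lemma Pnum4_nonpos : Pnum4 r c K <= 0.
Proof. unfold Pnum4; assert (0 <= 2*r*(1+2*c^2)) by nra; nra. Qed.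

Lemma Pnum5_nonpos : Pnum5 r c K <= 0.
Proof. unfold Pnum5; nra. Qed.

Lemma Pnum_decreasing w v : 0 < w < v -> Pnum r c K v < Pnum r c K w.
Proof.
intros w_lt_v.
pose proof Pnum1_nonpos as h1; pose proof Pnum2_le as h2; pose proof Pnum3_nonpos as h3.
pose proof Pnum4_nonpos as h4; pose proof Pnum5_nonpos as h5.
assert (h2_neg : Pnum2 r c K < 0) by (pose proof r2_gt1; nra).
assert (e2 : w^2 < v^2) by nra.
assert (e3 : w^3 <= v^3) by (apply pow_incr; lra).
assert (e4 : w^4 <= v^4) by (apply pow_incr; lra).
assert (e5 : w^5 <= v^5) by (apply pow_incr; lra).
assert (Pnum r c K v - Pnum r c K w
  = Pnum1 r c K * (v - w) + Pnum2 r c K * (v^2 - w^2) + Pnum3 r c K * (v^3 - w^3)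
    + Pnum4 r c K * (v^4 - w^4) + Pnum5 r c K * (v^5 - w^5)) by (unfold Pnum; ring).
assert (Pnum1 r c K * (v - w) <= 0) by (clear - h1 w_lt_v; nra).
assert (Pnum2 r c K * (v^2 - w^2) < 0) by (clear - h2_neg e2; nra).
assert (Pnum3 r c K * (v^3 - w^3) <= 0) by (clear - h3 e3; nra).
assert (Pnum4 r c K * (v^4 - w^4) <= 0) by (clear - h4 e4; nra).
assert (Pnum5 r c K * (v^5 - w^5) <= 0) by (clear - h5 e5; nra).
lra.
Qed.

Lemma Pnum_at_r_nonpos : Pnum r c K r <= 0.
Proof.
pose proof r2_gt1; pose proof Pnum1_nonpos; pose proof Pnum2_le.
pose proof Pnum3_nonpos; pose proof Pnum4_nonpos; pose proof Pnum5_nonpos.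
assert (0 < r^3) by (apply pow_lt; lra).
assert (0 < r^4) by (apply pow_lt; lra).
assert (0 < r^5) by (apply pow_lt; lra).
assert (Pnum1 r c K * r <= 0) by nra.
assert (Pnum2 r c K * r^2 <= 4*r^2*(1 - 5*r^2) * r^2) by nra.
assert (Pnum3 r c K * r^3 <= 0) by nra.
assert (Pnum4 r c K * r^4 <= 0) by nra.
assert (Pnum5 r c K * r^5 <= 0) by nra.
assert (2*r^2*(r^2-1)^2 + 4*r^2*(1 - 5*r^2) * r^2 <= 0) by nra.
unfold Pnum; lra.
Qed.

Lemma Psi_le u : 1 <= u -> Psi r c K u <= 8 * r^2 / u.
Proof.
intros u_ge1.
pose proof (ray_sqnorm_pos (2*r) u ltac:(lra) ltac:(lra)) as Q2r_pos.
pose proof (ray_sqnorm_pos (r-1) u ltac:(lra) ltac:(lra)) as Qm_pos.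
assert (ln (ray_sqnorm (r-1) c u) <= ln (ray_sqnorm (r+1) c u)).
{ apply ln_le; [lra |]; unfold ray_sqnorm; nra. }
assert (ln_quot : ln (ray_sqnorm (2*r) c u) - 2 * ln u
                  = ln (ray_sqnorm (2*r) c u / u^2)).
{ assert (0 < u^2) by (apply pow_lt; lra).
  unfold Rdiv; rewrite ln_mult, ln_Rinv, ln_pow by (try apply Rinv_0_lt_compat; lra).
  simpl; lra. }
assert (ray_sqnorm (2*r) c u / u^2 - 1 <= 8 * r^2 / u).
{ unfold ray_sqnorm.
  replace (((2*r)^2 + 2*(2*r)*c*u + u^2) / u^2 - 1) with (4*r^2/u^2 + 4*r*c/u)
    by (field; lra).
  apply Rmult_le_reg_r with (u^2); [nra |].
  replace ((4*r^2/u^2 + 4*r*c/u) * u^2) with (4*r^2 + 4*r*c*u) by (field; lra).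
  replace (8*r^2/u * u^2) with (8*r^2*u) by (field; lra).
  assert (0 <= r*u*(1-c)) by (apply Rmult_le_pos; nra).
  assert (0 <= r*(r*(u-1) + u*(r-1))) by (apply Rmult_le_pos; nra).
  nra. }
pose proof (ln_le_sub1 (ray_sqnorm (2*r) c u / u^2)
  ltac:(apply Rdiv_lt_0_compat; nra)).
unfold Psi; nra.
Qed.

Lemma Psi_eventually_lt e v : 0 < e -> exists V, v < V /\ Psi r c K V < e.
Proof.
intros e_gt0.
assert (0 < 8 * r^2 / e) by (apply Rdiv_lt_0_compat; nra).
set (V := Rmax v 1 + 8 * r^2 / e).
assert (v <= Rmax v 1 /\ 1 <= Rmax v 1) as [] by (split; [apply Rmax_l | apply Rmax_r]).
exists V; split; [unfold V; lra |].
apply Rle_lt_trans with (8 * r^2 / V); [apply Psi_le; unfold V; lra |].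
apply Rmult_lt_reg_r with (V / e); [apply Rdiv_lt_0_compat; unfold V; lra |].
replace (8 * r^2 / V * (V / e)) with (8 * r^2 / e) by (field; unfold V; lra).
replace (e * (V / e)) with V by (field; lra).
unfold V; lra.
Qed.

Lemma Psi_pos_near0 : exists u, 0 < u /\ 0 < Psi r c K u.
Proof.
set (C := ln (4*r^2) - K * (ln ((r+2)^2) - ln ((r-1)^2))).
set (u := exp (- (Rabs C + 1))).
assert (u_gt0 : 0 < u) by apply exp_pos.
assert (u_le1 : u <= 1).
{ rewrite <- exp_0; left; apply exp_increasing; pose proof (Rabs_pos C); lra. }
assert (ln_u : ln u = - (Rabs C + 1)) by apply ln_exp.
exists u; split; [exact u_gt0 |].
clearbody u.
assert (0 <= c*u <= 1) by (split; nra).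
(* For [u <= 1], [Psi u >= C - 2 ln u]: each quadratic is compared with its value at
   [u = 0] or [u = 1]. *)
assert (ln (4*r^2) <= ln (ray_sqnorm (2*r) c u)).
{ apply ln_le; [nra |]; unfold ray_sqnorm; nra. }
assert (ln ((r-1)^2) <= ln (ray_sqnorm (r-1) c u)).
{ apply ln_le; [nra |]; unfold ray_sqnorm; nra. }
assert (ln (ray_sqnorm (r+1) c u) <= ln ((r+2)^2)).
{ apply ln_le; [apply ray_sqnorm_pos; lra |]; unfold ray_sqnorm; nra. }
assert (K * (ln (ray_sqnorm (r+1) c u) - ln (ray_sqnorm (r-1) c u))
        <= K * (ln ((r+2)^2) - ln ((r-1)^2))) by (apply Rmult_le_compat_l; lra).
pose proof (Rle_abs (- C)) as C_le; rewrite Rabs_Ropp in C_le.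
pose proof (Rabs_pos C).
unfold Psi; rewrite ln_u; unfold C in *; lra.
Qed.

Lemma Psi_increasing_after w a b : 0 < w -> Pnum r c K w <= 0 -> w < a < b ->
  Psi r c K a < Psi r c K b.
Proof.
intros w_gt0 Pw_le0 ab.
destruct (MVT_cor2 (Psi r c K) (dPsi r c K) a b ltac:(lra))
  as [xi [Psi_diff xi_in]].
{ intros t t_in; apply derivable_pt_lim_Psi; lra. }
destruct (dPsi_scaled_Pnum xi ltac:(lra)) as [D [D_gt0 dPsi_xi]].
pose proof (Pnum_decreasing w xi ltac:(lra)).
assert (0 < dPsi r c K xi) by (rewrite dPsi_xi; nra).
nra.
Qed.

Lemma Psi_neg_after w v : 0 < w -> Pnum r c K w <= 0 -> w < v -> Psi r c K v < 0.
Proof.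
intros w_gt0 Pw_le0 w_lt_v.
destruct (Rlt_or_le (Psi r c K v) 0) as [| Psi_v_ge0]; [assumption | exfalso].
assert (Psi_v1 : Psi r c K v < Psi r c K (v+1))
  by (apply (Psi_increasing_after w); lra).
destruct (Psi_eventually_lt (Psi r c K (v+1)) (v+1) ltac:(lra)) as [V [v1_lt_V Psi_V]].
pose proof (Psi_increasing_after w (v+1) V w_gt0 Pw_le0 ltac:(lra)).
lra.
Qed.

Lemma Psi_neg_of_le a b : 0 < a < b -> Psi r c K a <= Psi r c K b -> Psi r c K b < 0.
Proof.
intros ab Psi_ab.
destruct (MVT_cor2 (Psi r c K) (dPsi r c K) a b ltac:(lra))
  as [xi [Psi_diff xi_in]].
{ intros t t_in; apply derivable_pt_lim_Psi; lra. }
destruct (dPsi_scaled_Pnum xi ltac:(lra)) as [D [D_gt0 dPsi_xi]].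
assert (0 <= dPsi r c K xi) by nra.
apply (Psi_neg_after xi); nra.
Qed.

Lemma Psi_sign_change : exists u0, 0 < u0 /\ Psi r c K u0 = 0 /\
  (forall u, 0 < u -> Psi r c K u = 0 -> u = u0) /\
  (forall u, 0 < u < u0 -> Psi r c K u > 0) /\
  (forall u, u > u0 -> Psi r c K u < 0).
Proof.
destruct Psi_pos_near0 as [us [us_gt0 Psi_us]].
set (ub := us + r + 1).
assert (Psi_ub : Psi r c K ub < 0).
{ apply (Psi_neg_after r); [lra | apply Pnum_at_r_nonpos | unfold ub; lra]. }
destruct (IVT_interv (fun u => - Psi r c K u) us ub) as [u0 [u0_in Psi_u0]];
  [| unfold ub; lra | lra | lra |].
{ intros u u_in; apply continuity_pt_opp, derivable_continuous_pt.
  exists (dPsi r c K u); apply derivable_pt_lim_Psi; lra. }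
assert (pos_before : forall u, 0 < u < u0 -> Psi r c K u > 0).
{ intros u u_in; destruct (Rlt_or_le 0 (Psi r c K u)); [lra |].
  pose proof (Psi_neg_of_le u u0 u_in ltac:(lra)); lra. }
assert (neg_after : forall u, u > u0 -> Psi r c K u < 0).
{ intros u u_gt; destruct (Rlt_or_le (Psi r c K u) 0); [assumption |].
  apply (Psi_neg_of_le u0 u); lra. }
exists u0; split; [lra |]; split; [lra |]; split; [| split; assumption].
intros u u_gt0 Psi_u.
destruct (Rtotal_order u u0) as [lt | [eq | gt]]; [| assumption |].
- specialize (pos_before u (conj u_gt0 lt)); lra.
- specialize (neg_after u gt); lra.
Qed.

End Ray.

Lemma r_of_gt1 d b : (0 < d)%nat -> (0 < b)%nat -> 1 < r_of d b.
Proof.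
intros d_gt0 b_gt0; apply lt_0_INR in d_gt0, b_gt0; unfold r_of.
apply Rmult_lt_reg_r with (INR d); [lra |].
field_simplify; lra.
Qed.

Lemma Phi_ray_eq d a b theta u : (0 < d)%nat -> (0 < b)%nat -> 0 <= cos theta -> 0 < u ->
  Phi_ray d a b theta u = INR d / 2 * Psi (r_of d b) (cos theta) (R_of d a) u.
Proof.
intros d_gt0 b_gt0 c_ge0 u_gt0.
pose proof (r_of_gt1 d b d_gt0 b_gt0) as r_gt1.
assert (INR d <> 0) by (apply not_0_INR; lia).
assert (ray : forall k, (r_of d b + u * cos theta + k)^2 + (u * sin theta)^2
                        = ray_sqnorm (r_of d b + k) (cos theta) u).
{ intros k; pose proof (sin2_cos2 theta); unfold ray_sqnorm, Rsqr in *; nra. }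
unfold Phi_ray, Phi, cmod, Rminus.
rewrite !ray.
replace (r_of d b + - r_of d b) with 0 by ring.
replace (r_of d b + r_of d b) with (2 * r_of d b) by ring.
replace (r_of d b + - (1)) with (r_of d b - 1) by ring.
replace (ray_sqnorm 0 (cos theta) u) with (u^2) by (unfold ray_sqnorm; ring).
rewrite sqrt_pow2, !ln_sqrt by (try apply ray_sqnorm_pos; lra).
unfold Psi, R_of; field; lra.
Qed.

Theorem lemma4p6 (d a b : nat) (hd : (0 < d)%nat) (ha : (0 < a)%nat) (hb : (0 < b)%nat)
  (hR : R_of d a >= 3 * r_of d b) :
  forall theta : R, 0 <= theta <= PI / 2 ->
  exists u0 : R, 0 < u0 /\ Phi_ray d a b theta u0 = 0 /\
    (forall u : R, 0 < u -> Phi_ray d a b theta u = 0 -> u = u0) /\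
    (forall u : R, 0 < u < u0 -> Phi_ray d a b theta u > 0) /\
    (forall u : R, u > u0 -> Phi_ray d a b theta u < 0).
Proof.
intros theta theta_in.
assert (d_pos : 0 < INR d / 2) by (apply lt_0_INR in hd; lra).
assert (cos_in : 0 <= cos theta <= 1).
{ split; [apply cos_ge_0; pose proof PI_RGT_0; lra | apply COS_bound]. }
destruct (Psi_sign_change (r_of d b) (cos theta) (R_of d a) (r_of_gt1 d b hd hb)
  (proj1 cos_in) (proj2 cos_in) ltac:(lra)) as [u0 [u0_gt0 [Psi_u0 [uniq [pos_before neg_after]]]]].
exists u0; split; [exact u0_gt0 |]; split; [| split; [| split]].
- rewrite Phi_ray_eq, Psi_u0 by (lia || lra); ring.
- intros u u_gt0; rewrite Phi_ray_eq by (lia || lra).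
  intros Phi_u; apply uniq; [exact u_gt0 | nra].
- intros u u_in; rewrite Phi_ray_eq by (lia || lra).
  specialize (pos_before u u_in); nra.
- intros u u_gt; rewrite Phi_ray_eq by (lia || lra).
  specialize (neg_after u u_gt); nra.
Qed.
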